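(* Let $X$ be an $n$-dimensional polyhedral normed space and let $2 \leq k \leq n-1$. Let $Y \subseteq X$ be a $k$-dimensional subspace such that every projection in $\mathcal{P}_{\min}(X, Y)$ has at most $m$ different norming pairs, where $m$ is a fixed positive integer. Then there exists $r>0$ such that for every $k$-dimensional subspace $Y_0 \subseteq X$ with $d(Y, Y_0) \leq r$, every projection in $\mathcal{P}_{\min}(X, Y_0)$ has at most $m$ different norming pairs.
   Context: A normed space $X=(\mathbb{R}^n,\|\cdot\|)$ is polyhedral if its unit ball is a convex polytope. A projection onto $Y$ is a linear $P:X\to Y$ with $P|_Y=\mathrm{id}_Y$; $\lambda(Y,X)$ is the infimum of their operator norms and $\mathcal{P}_{\min}(X,Y)$ the set of projections of norm $\lambda(Y,X)$. A norming pair for a projection $P$ is a pair $(x,f)\in \mathrm{ext}\,B_X\times \mathrm{ext}\,B_{X^*}$ (extreme points of the unit balls of $X$ and $X^*$) with $f(P(x))=\|P\|$. For $k$-dimensional subspaces $Y,Z$, $d(Y,Z)$ is the Hausdorff distance between the unit spheres of $Y$ and $Z$. *)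

(* R : realType (mathcomp-analysis reals), vectors 'rV[R]_n,
   subspaces as row spaces of matrices (mxalgebra). *)
From HB Require Import structures.
From mathcomp Require Import all_boot all_order all_algebra.
From mathcomp Require Import classical_sets reals.
Set Implicit Arguments. Unset Strict Implicit. Unset Printing Implicit Defensive.
Import Order.TTheory GRing.Theory Num.Theory.
Local Open Scope ring_scope.
Local Open Scope classical_set_scope.

Section Defs.
Variables (R : realType) (n : nat).
Implicit Types (N : 'rV[R]_n -> R) (x y f : 'rV[R]_n) (P Y : 'M[R]_n).

Definition is_norm N :=
  [/\ forall x, N x = 0 -> x = 0,
      forall (a : R) x, N (a *: x) = `|a| * N x
    & forall x y, N (x + y) <= N x + N y].

Definition conv_hull (s : seq 'rV[R]_n) : set 'rV[R]_n :=
  [set x | exists w : 'I_(size s) -> R,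
     [/\ forall i, 0 <= w i, \sum_i w i = 1 & x = \sum_i w i *: s`_(val i)]].

Definition ball1 N : set 'rV[R]_n := [set x | N x <= 1].

Definition polyhedral N := exists s : seq 'rV[R]_n, ball1 N = conv_hull s.

(* pairing of a functional f (represented by a row vector) with x *)
Definition pairing f x : R := (x *m f^T) 0 0.

Definition dual_norm N f : R := sup [set pairing f x | x in ball1 N].

Definition dual_ball1 N : set 'rV[R]_n := [set f | dual_norm N f <= 1].

Definition extreme (S : set 'rV[R]_n) x :=
  S x /\ forall y z (t : R), S y -> S z -> 0 < t < 1 ->
    x = t *: y + (1 - t) *: z -> y = x /\ z = x.

(* P (acting on row vectors x |-> x *m P) is a projection onto the row space of Y *)
Definition is_proj Y P :=
  (P <= Y)%MS /\ forall y : 'rV[R]_n, (y <= Y)%MS -> y *m P = y.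

Definition op_norm N P : R := sup [set N (x *m P) | x in ball1 N].

Definition proj_const N Y : R := inf [set op_norm N P | P in is_proj Y].

Definition is_min_proj N Y P := is_proj Y P /\ op_norm N P = proj_const N Y.

Definition norming_pair N P x f :=
  [/\ extreme (ball1 N) x, extreme (dual_ball1 N) f
    & pairing f (x *m P) = op_norm N P].

Definition at_most_norming N P (m : nat) :=
  exists s : seq ('rV[R]_n * 'rV[R]_n),
    (size s <= m)%N /\ forall x f, norming_pair N P x f -> (x, f) \in s.

Definition sphere N Y : set 'rV[R]_n := [set y | (y <= Y)%MS /\ N y = 1].

Definition dist_to N x (S : set 'rV[R]_n) : R := inf [set N (x - z) | z in S].

Definition hdist N Y Z : R :=
  Num.max (sup [set dist_to N y (sphere N Z) | y in sphere N Y])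
          (sup [set dist_to N z (sphere N Y) | z in sphere N Z]).

End Defs.

(* The unit ball is the convex hull of a finite set s of vertices.  Hence an
   extreme point of B_X is a vertex, and an extreme point f of B_X* is
   determined by the set of vertices on which f equals 1, so norming pairs are
   coded injectively by elements of a finite type.  If the theorem failed,
   pigeonholing over these codes would give one code set A with more than m
   elements that occurs for minimal projections onto subspaces arbitrarily
   close to Y.  These projections are uniformly bounded, so they accumulate at
   some Ps.  In the limit Ps is a projection onto Y of norm at most lambda(Y, X),
   since lambda is upper semicontinuous in the subspace, and every pair coded
   in A still norms Ps; so Ps is a minimal projection onto Y with more than m
   norming pairs. *)

Set Warnings "-notation-overridden,-ambiguous-paths,-notation-incompatible-prefix".
From HB Require Import structures.
From mathcomp Require Import all_boot all_order all_algebra.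
From mathcomp Require Import boolp classical_sets reals topology normedtype.
From mathcomp Require Import ring lra.
Import Order.TTheory GRing.Theory Num.Theory.
Import numFieldTopology.Exports numFieldNormedType.Exports.
Set Implicit Arguments. Unset Strict Implicit. Unset Printing Implicit Defensive.
Local Open Scope ring_scope.
Local Open Scope classical_set_scope.

Lemma le0_small_mul (R : realFieldType) (a b c : R) : 0 <= b -> 0 < c ->
  (forall e, 0 < e -> e <= c -> a <= e * b) -> a <= 0.
Proof.
move=> b0 c0 h; apply/ler_addgt0Pr => z z0; rewrite add0r.
have b1 : 0 < b + 1 by rewrite ltr_pwDr.
have e0 : 0 < Num.min c (z / (b + 1)) by rewrite lt_min c0 divr_gt0.
apply: le_trans (h _ e0 _) _; first by rewrite ge_min lexx.
apply: le_trans (_ : z / (b + 1) * b <= z).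
  by rewrite ler_wpM2r // ge_min lexx orbT.
by rewrite mulrAC ler_pdivrMr // ler_pM2l // lerDl.
Qed.

Section L1Norm.
Variables (R : numDomainType) (n : nat).
Implicit Types (v : 'rV[R]_n) (D : 'M[R]_n).

Definition l1norm v : R := \sum_i `|v 0 i|.
Definition l1mx D : R := \sum_i \sum_j `|D i j|.

Lemma l1norm_ge0 v : 0 <= l1norm v.
Proof. exact: sumr_ge0. Qed.

Lemma l1mx_ge0 D : 0 <= l1mx D.
Proof. by apply: sumr_ge0 => i _; apply: sumr_ge0. Qed.

Lemma l1mxN D : l1mx (- D) = l1mx D.
Proof. by apply: eq_bigr => i _; apply: eq_bigr => j _; rewrite mxE normrN. Qed.

Lemma ler_coord_l1norm v i : `|v 0 i| <= l1norm v.
Proof. by rewrite /l1norm (bigD1 i) //= lerDl sumr_ge0. Qed.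

Lemma ler_row_l1mx D i : \sum_j `|D i j| <= l1mx D.
Proof.
by rewrite /l1mx [leRHS](bigD1 i) //= lerDl; apply: sumr_ge0 => ? _; apply: sumr_ge0.
Qed.

Lemma l1norm0 : l1norm 0 = 0.
Proof. by rewrite /l1norm big1 // => i _; rewrite mxE normr0. Qed.

Lemma l1normZ a v : l1norm (a *: v) = `|a| * l1norm v.
Proof. by rewrite /l1norm mulr_sumr; apply: eq_bigr => i _; rewrite mxE normrM. Qed.

Lemma ler_l1normD u v : l1norm (u + v) <= l1norm u + l1norm v.
Proof. by rewrite /l1norm -big_split; apply: ler_sum => i _; rewrite mxE ler_normD. Qed.

Lemma ler_l1norm_sum (I : Type) (r : seq I) (P : pred I) (F : I -> 'rV[R]_n) :
  l1norm (\sum_(i <- r | P i) F i) <= \sum_(i <- r | P i) l1norm (F i).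
Proof.
elim/big_ind2: _ => [|a b c d h1 h2|//]; first by rewrite l1norm0.
by apply: le_trans (ler_l1normD _ _) _; exact: lerD.
Qed.

Lemma ler_l1norm_mulmx v D : l1norm (v *m D) <= l1norm v * l1mx D.
Proof.
apply: (@le_trans _ _ (\sum_j \sum_i `|v 0 i| * `|D i j|)).
  apply: ler_sum => j _; rewrite mxE.
  by apply: le_trans (ler_norm_sum _ _ _) _; apply: ler_sum => i _; rewrite normrM.
rewrite exchange_big /= mulr_suml; apply: ler_sum => i _.
by rewrite -mulr_sumr ler_wpM2l // ler_row_l1mx.
Qed.

End L1Norm.

Section NormFacts.
Variables (R : realType) (n : nat) (N : 'rV[R]_n -> R).
Hypothesis HN : is_norm N.

Lemma NnormZ a x : N (a *: x) = `|a| * N x.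
Proof. by case: HN. Qed.

Lemma ler_NnormD x y : N (x + y) <= N x + N y.
Proof. by case: HN. Qed.

Lemma Nnorm_eq0 x : N x = 0 -> x = 0.
Proof. by case: HN => h _ _; exact: h. Qed.

Lemma Nnorm0 : N 0 = 0.
Proof. by rewrite -(scale0r 0) NnormZ normr0 mul0r. Qed.

Lemma NnormN x : N (- x) = N x.
Proof. by rewrite -scaleN1r NnormZ normrN normr1 mul1r. Qed.

Lemma ler_NnormB x y : N (x - y) <= N x + N y.
Proof. by rewrite -(NnormN y) ler_NnormD. Qed.

Lemma Nnorm_ge0 x : 0 <= N x.
Proof.
by have := ler_NnormD x (- x); rewrite subrr Nnorm0 NnormN; lra.
Qed.

Lemma Nnorm_gt0 x : x != 0 -> 0 < N x.
Proof. by move=> x0; rewrite lt_def Nnorm_ge0 andbT; apply: contra x0 => /eqP/Nnorm_eq0->. Qed.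

Lemma Nnorm_normalize x : x != 0 -> N ((N x)^-1 *: x) = 1.
Proof. by move=> x0; rewrite NnormZ ger0_norm ?invr_ge0 ?Nnorm_ge0 // mulVf ?gt_eqF ?Nnorm_gt0. Qed.

Lemma ler_Nnorm_sum (I : Type) (r : seq I) (P : pred I) (F : I -> 'rV[R]_n) :
  N (\sum_(i <- r | P i) F i) <= \sum_(i <- r | P i) N (F i).
Proof.
elim/big_ind2: _ => [|a b c d h1 h2|//]; first by rewrite Nnorm0.
by apply: le_trans (ler_NnormD _ _) _; exact: lerD.
Qed.

Lemma Nnorm_small_eq0 v (b c : R) : 0 <= b -> 0 < c ->
  (forall e, 0 < e -> e <= c -> N v <= e * b) -> v = 0.
Proof.
move=> b0 c0 h; apply: Nnorm_eq0; apply/eqP; rewrite eq_le Nnorm_ge0 andbT.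
exact: le0_small_mul b0 c0 h.
Qed.

Definition l1_coef := \sum_j N (delta_mx 0 j).

Lemma l1_coef_ge0 : 0 <= l1_coef.
Proof. by apply: sumr_ge0 => j _; exact: Nnorm_ge0. Qed.

Lemma ler_N_l1norm (v : 'rV[R]_n) : N v <= l1_coef * l1norm v.
Proof.
rewrite {1}(row_sum_delta v); apply: le_trans (ler_Nnorm_sum _ _ _) _.
rewrite /l1_coef mulr_suml; apply: ler_sum => j _.
by rewrite NnormZ mulrC ler_wpM2l ?Nnorm_ge0 // ler_coord_l1norm.
Qed.

Lemma op_norm_le (P : 'M[R]_n) c : 0 <= c -> (forall x, N (x *m P) <= c * N x) -> op_norm N P <= c.
Proof.
move=> c0 h; apply: ge_sup; first by exists 0, 0; rewrite ?mul0mx /ball1 /= Nnorm0.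
by move=> y [x Bx <-]; apply: le_trans (h x) _; rewrite ler_piMr.
Qed.

End NormFacts.

Section Pairing.
Variables (R : realType) (n : nat).
Implicit Types (f g x y : 'rV[R]_n).

Lemma pairingE f x : pairing f x = \sum_j x 0 j * f 0 j.
Proof. by rewrite /pairing mxE; apply: eq_bigr => j _; rewrite mxE. Qed.

Lemma pairingBr f x y : pairing f (x - y) = pairing f x - pairing f y.
Proof. by rewrite /pairing mulmxBl !mxE. Qed.

Lemma pairingZr a f x : pairing f (a *: x) = a * pairing f x.
Proof. by rewrite /pairing -scalemxAl mxE. Qed.

Lemma pairing_sumr f (I : Type) (r : seq I) (P : pred I) (F : I -> 'rV[R]_n) :
  pairing f (\sum_(i <- r | P i) F i) = \sum_(i <- r | P i) pairing f (F i).
Proof. by rewrite /pairing mulmx_suml summxE. Qed.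

Lemma pairingDl f g x : pairing (f + g) x = pairing f x + pairing g x.
Proof. by rewrite /pairing linearD mulmxDr mxE. Qed.

Lemma pairingBl f g x : pairing (f - g) x = pairing f x - pairing g x.
Proof. by rewrite /pairing linearB mulmxBr !mxE. Qed.

Lemma pairingZl a f x : pairing (a *: f) x = a * pairing f x.
Proof. by rewrite /pairing linearZ -scalemxAr mxE. Qed.

Lemma ler_pairing f x : `|pairing f x| <= l1norm x * l1norm f.
Proof.
rewrite pairingE /l1norm mulr_suml.
apply: le_trans (ler_norm_sum _ _ _) _; apply: ler_sum => j _.
by rewrite normrM ler_wpM2l // ler_coord_l1norm.
Qed.

End Pairing.

Section Polytope.
Variables (R : realType) (n : nat) (N : 'rV[R]_n -> R) (s : seq 'rV[R]_n).
Hypothesis HN : is_norm N.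
Hypothesis Hs : ball1 N = conv_hull s.
Implicit Types (x v : 'rV[R]_n) (D P Q : 'M[R]_n).

Lemma conv_hull_vertex (i : 'I_(size s)) : conv_hull s s`_i.
Proof.
exists (fun j => (j == i)%:R); split.
- by move=> j; rewrite ler0n.
- by rewrite (bigD1 i) //= eqxx big1 ?addr0 // => j /negbTE ->.
- rewrite (bigD1 i) //= eqxx scale1r big1 ?addr0 // => j /negbTE ->.
  by rewrite scale0r.
Qed.

Definition vertex_l1 := \sum_(i < size s) l1norm s`_i.

Lemma vertex_l1_ge0 : 0 <= vertex_l1.
Proof. by apply: sumr_ge0 => i _; exact: l1norm_ge0. Qed.

Lemma ler_l1norm_ball x : ball1 N x -> l1norm x <= vertex_l1.
Proof.
rewrite Hs => -[w [w0 w1 ->]].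
apply: le_trans (ler_l1norm_sum _ _ _) _; apply: ler_sum => i _.
rewrite l1normZ ger0_norm // ler_piMl ?l1norm_ge0 //.
by rewrite -w1 (bigD1 i) //= lerDl sumr_ge0.
Qed.

Lemma ler_l1norm_N v : l1norm v <= vertex_l1 * N v.
Proof.
have [->|v0] := eqVneq v 0; first by rewrite l1norm0 Nnorm0 // mulr0.
have Nv := Nnorm_gt0 HN v0.
have Bv : ball1 N ((N v)^-1 *: v) by rewrite /ball1 /= Nnorm_normalize.
have := ler_l1norm_ball Bv.
rewrite l1normZ ger0_norm ?invr_ge0 ?Nnorm_ge0 //.
by rewrite -(ler_pM2l Nv) mulrA mulfV ?gt_eqF // mul1r mulrC.
Qed.

Definition mulmx_coef := l1_coef N * vertex_l1.

Lemma mulmx_coef_ge0 : 0 <= mulmx_coef.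
Proof. exact: mulr_ge0 (l1_coef_ge0 HN) vertex_l1_ge0. Qed.

Lemma ler_N_mulmx x D : N (x *m D) <= mulmx_coef * l1mx D * N x.
Proof.
apply: le_trans (ler_N_l1norm HN _) _.
apply: le_trans (ler_wpM2l (l1_coef_ge0 HN) (ler_l1norm_mulmx x D)) _.
rewrite /mulmx_coef -!mulrA ler_wpM2l ?(l1_coef_ge0 HN) // [l1mx D * _]mulrC mulrA.
by rewrite ler_wpM2r ?l1mx_ge0 // ler_l1norm_N.
Qed.

Lemma ler_N_mulmx_l1mx x D (e : R) : l1mx D <= e -> N (x *m D) <= mulmx_coef * e * N x.
Proof.
move=> De; apply: le_trans (ler_N_mulmx x D) _.
by move: (ler_wpM2l mulmx_coef_ge0 De) => /(ler_wpM2r (Nnorm_ge0 HN x)).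
Qed.

Lemma op_norm_ub P y : [set N (x *m P) | x in ball1 N] y -> y <= mulmx_coef * l1mx P.
Proof.
move=> [x Bx <-]; apply: le_trans (ler_N_mulmx _ _) _.
by rewrite ler_piMr // mulr_ge0 ?mulmx_coef_ge0 ?l1mx_ge0.
Qed.

Lemma op_norm_ge0 P : 0 <= op_norm N P.
Proof.
apply: ub_le_sup; first by exists (mulmx_coef * l1mx P) => y /op_norm_ub.
by exists 0; rewrite ?mul0mx /ball1 /= Nnorm0.
Qed.

Lemma ler_op_norm x P : N (x *m P) <= op_norm N P * N x.
Proof.
have [->|x0] := eqVneq x 0; first by rewrite mul0mx !Nnorm0 // mulr0.
have Nx := Nnorm_gt0 HN x0.
have : N ((N x)^-1 *: x *m P) <= op_norm N P.
  apply: ub_le_sup; first by exists (mulmx_coef * l1mx P) => y /op_norm_ub.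
  by exists ((N x)^-1 *: x); rewrite /ball1 //= Nnorm_normalize.
rewrite -scalemxAl NnormZ // ger0_norm ?invr_ge0 ?Nnorm_ge0 //.
by rewrite -(ler_pM2l Nx) mulrA mulfV ?gt_eqF // mul1r mulrC.
Qed.

Lemma ler_op_normD P Q : op_norm N P <= op_norm N Q + mulmx_coef * l1mx (P - Q).
Proof.
apply: (op_norm_le HN) => [|x].
  by rewrite addr_ge0 ?op_norm_ge0 // mulr_ge0 ?mulmx_coef_ge0 ?l1mx_ge0.
rewrite -{1}(subrK Q P) mulmxDr addrC mulrDl.
apply: le_trans (ler_NnormD HN _ _) _.
by rewrite lerD ?ler_op_norm ?ler_N_mulmx.
Qed.

Lemma op_norm_lipschitz P Q : `|op_norm N P - op_norm N Q| <= mulmx_coef * l1mx (P - Q).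
Proof.
have := ler_op_normD P Q; have := ler_op_normD Q P; rewrite -opprB l1mxN.
by rewrite ler_norml; lra.
Qed.

Lemma entry_le_op_norm P i j : `|P i j| <= vertex_l1 * op_norm N P * l1_coef N.
Proof.
have -> : P i j = ((delta_mx 0 i : 'rV[R]_n) *m P) 0 j by rewrite -rowE mxE.
apply: le_trans (ler_coord_l1norm _ _) _.
apply: le_trans (ler_l1norm_N _) _.
rewrite -mulrA ler_wpM2l ?vertex_l1_ge0 //.
apply: le_trans (ler_op_norm _ _) _.
rewrite ler_wpM2l ?op_norm_ge0 // /l1_coef (bigD1 i) //= lerDl.
by apply: sumr_ge0 => j' _; exact: Nnorm_ge0.
Qed.

End Polytope.

Definition approx_by (R : realType) (n : nat) (N : 'rV[R]_n -> R) (e : R)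
    (Y Z : 'M[R]_n) :=
  forall u, (u <= Y)%MS -> exists2 w, (w <= Z)%MS & N (u - w) <= e * N u.

Section Projections.
Variables (R : realType) (n : nat) (N : 'rV[R]_n -> R) (s : seq 'rV[R]_n).
Hypothesis HN : is_norm N.
Hypothesis Hs : ball1 N = conv_hull s.
Implicit Types (u v w x : 'rV[R]_n) (P Q Y Z : 'M[R]_n).

Lemma proj_sub Y P x : is_proj Y P -> (x *m P <= Y)%MS.
Proof. by case=> PY _; exact: submx_trans (submxMl x P) PY. Qed.

Lemma is_proj_proj_mx Y : is_proj Y (proj_mx Y (Y^C)%MS).
Proof.
split; first by have := proj_mx_sub Y (Y^C)%MS 1%:M; rewrite mul1mx.
by move=> y yY; apply: proj_mx_id => //; exact: capmx_compl.
Qed.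

Lemma mxrank_proj Y P : is_proj Y P -> \rank P = \rank Y.
Proof.
move=> [PY Pid]; apply/eqP; rewrite eqn_leq mxrankS //=.
have -> : Y = Y *m P by apply/row_matrixP => i; rewrite row_mul Pid ?row_sub.
exact: mxrankM_maxr.
Qed.

Lemma submx_of_near Y v (b c : R) : 0 <= b -> 0 < c ->
  (forall e, 0 < e -> e <= c -> exists2 w, (w <= Y)%MS & N (v - w) <= e * b) ->
  (v <= Y)%MS.
Proof.
move=> b0 c0 near; set Q := proj_mx Y (Y^C)%MS; have [_ Qid] := is_proj_proj_mx Y.
suff -> : v = v *m Q by exact: proj_sub (is_proj_proj_mx Y).
apply/eqP; rewrite -subr_eq0; apply/eqP.
apply: (Nnorm_small_eq0 HN (b := (1 + op_norm N Q) * b) _ c0).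
  by rewrite mulr_ge0 // addr_ge0 ?(op_norm_ge0 HN Hs).
move=> e e0 ec; have [w wY vw] := near e e0 ec.
have -> : v - v *m Q = (v - w) - (v - w) *m Q by rewrite mulmxBl (Qid w) // opprB addrA subrK.
apply: le_trans (ler_NnormB HN _ _) _.
apply: le_trans (lerD (lexx _) (ler_op_norm HN Hs _ _)) _.
by rewrite -[X in X + _]mul1r -mulrDl mulrCA ler_wpM2l // addr_ge0 ?(op_norm_ge0 HN Hs).
Qed.

Lemma proj_const_le Y P : is_proj Y P -> proj_const N Y <= op_norm N P.
Proof.
move=> hP; apply: ge_inf; last by exists P.
by exists 0 => _ [Q _ <-]; exact: op_norm_ge0 HN Hs Q.
Qed.

Lemma proj_const_approx Y e : 0 < e ->
  exists2 Q, is_proj Y Q & op_norm N Q < proj_const N Y + e.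
Proof.
move=> e0.
have [||_ [Q hQ <-] lt] := @inf_lt _ [set op_norm N P | P in is_proj Y] (proj_const N Y + e).
- by exists (op_norm N (proj_mx Y (Y^C)%MS)), (proj_mx Y (Y^C)%MS) => //; exact: is_proj_proj_mx.
- by rewrite ltrDl.
by exists Q.
Qed.

(* The kernel of Q is a complement of Z, and the projection onto Z along it
   has norm at most |Q| / (1 - t). *)
Lemma proj_const_le_perturb Y Z Q (t : R) :
  \rank Y = \rank Z -> is_proj Y Q -> 0 <= t < 1 ->
  (forall u, (u <= Z)%MS -> N (u *m Q - u) <= t * N u) ->
  proj_const N Z <= op_norm N Q / (1 - t).
Proof.
move=> rYZ hQ /andP[t0 t1] near; have t1' : 0 < 1 - t by rewrite subr_gt0.
set V := kermx Q.
have ZV0 : (Z :&: V)%MS = 0.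
  apply/eqP/rowV0P => v; rewrite sub_capmx => /andP[vZ /sub_kermxP vQ].
  have := near v vZ; rewrite vQ sub0r NnormN // -subr_le0 -{1}[N v]mul1r -mulrBl.
  rewrite pmulr_rle0 // => Nv0; apply: (Nnorm_eq0 HN).
  by apply/eqP; rewrite eq_le Nv0 Nnorm_ge0.
have ZVfull : row_full (Z + V)%MS.
  rewrite -col_leq_rank mxrank_disjoint_sum // mxrank_ker (mxrank_proj hQ) rYZ.
  by rewrite subnKC // rank_leq_col.
set Qz := proj_mx Z V.
have hQz : is_proj Z Qz.
  split; first by have := proj_mx_sub Z V 1%:M; rewrite mul1mx.
  by move=> y yZ; apply: proj_mx_id.
apply: le_trans (proj_const_le hQz) _.
apply: (op_norm_le HN) => [|x]; first by rewrite divr_ge0 ?(op_norm_ge0 HN Hs) ?ltW.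
set u := x *m Qz.
have uZ : (u <= Z)%MS by exact: proj_mx_sub.
have xuV : (x - u <= V)%MS by apply: proj_mx_compl_sub; exact: submx_full.
have xQ : x *m Q = u *m Q.
  by apply/eqP; rewrite -subr_eq0 -mulmxBl; apply/eqP/sub_kermxP.
have Nu : N u <= op_norm N Q * N x + t * N u.
  rewrite -{1}[u](subrKC (u *m Q)).
  apply: le_trans (ler_NnormD HN _ _) _; rewrite lerD //.
    by rewrite -xQ (ler_op_norm HN Hs).
  by rewrite -NnormN // opprB near.
by rewrite mulrAC ler_pdivlMr // mulrBr mulr1 lerBlDr [N u * t]mulrC.
Qed.

Lemma proj_const_near Y Y0 Q (d : R) :
  \rank Y0 = \rank Y -> is_proj Y Q -> 0 <= d ->
  (op_norm N Q + 1) * d <= 2^-1 -> approx_by N d Y0 Y ->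
  proj_const N Y0 <= op_norm N Q + 2 * op_norm N Q * ((op_norm N Q + 1) * d).
Proof.
move=> rY0 hQ d0 small near; set q := op_norm N Q; set t := (q + 1) * d.
have q0 : 0 <= q := op_norm_ge0 HN Hs Q.
have t0 : 0 <= t by rewrite mulr_ge0 ?addr_ge0.
have t1 : t < 1 by apply: le_lt_trans small _; rewrite invf_lt1 ?ltr1n.
apply: le_trans (proj_const_le_perturb (t := t) (esym rY0) hQ _ _) _; first by rewrite t0.
  move=> u uY0; have [w wY uw] := near u uY0.
  have -> : u *m Q - u = (u - w) *m Q - (u - w).
    by rewrite mulmxBl (hQ.2 w wY) opprB addrA subrK.
  apply: le_trans (ler_NnormB HN _ _) _.
  apply: le_trans (lerD (ler_op_norm HN Hs _ _) (lexx _)) _.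
  by rewrite -[X in _ + X]mul1r -mulrDl -mulrA ler_wpM2l // addr_ge0.
have t1' : 0 < 1 - t by rewrite subr_gt0.
rewrite ler_pdivrMr //.
have h2t : 0 <= 1 - 2 * t.
  by rewrite subr_ge0 -ler_pdivlMl ?mulr1.
have -> : (q + 2 * q * t) * (1 - t) = q + q * t * (1 - 2 * t) by ring.
change (q <= q + q * t * (1 - 2 * t)).
by rewrite lerDl (mulr_ge0 (mulr_ge0 q0 t0) h2t).
Qed.

Lemma min_proj_near_le Y Y0 Q P (d : R) :
  \rank Y0 = \rank Y -> is_proj Y Q -> 0 <= d ->
  (op_norm N Q + 1) * d <= 2^-1 -> approx_by N d Y0 Y ->
  is_min_proj N Y0 P -> op_norm N P <= 2 * op_norm N Q.
Proof.
move=> rY0 hQ d0 small near [_ ->].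
apply: le_trans (proj_const_near rY0 hQ d0 small near) _.
have q0 := op_norm_ge0 HN Hs Q.
have : 2 * op_norm N Q * ((op_norm N Q + 1) * d) <= 2 * op_norm N Q * 2^-1.
  by rewrite ler_wpM2l // mulr_ge0.
by lra.
Qed.

End Projections.

Section HausdorffDistance.
Variables (R : realType) (n : nat) (N : 'rV[R]_n -> R).
Hypothesis HN : is_norm N.
Implicit Types (u w y z : 'rV[R]_n) (Y Z : 'M[R]_n).

Lemma sphere_neq0 Y : (0 < \rank Y)%N -> sphere N Y !=set0.
Proof.
move=> rY; have : Y != 0 by apply: contraTneq rY => ->; rewrite mxrank0.
case/rowV0Pn => v vY v0; exists ((N v)^-1 *: v).
by split; [exact: scalemx_sub | exact: Nnorm_normalize].
Qed.

Lemma dist_to_le y (S : set 'rV[R]_n) z : S z -> dist_to N y S <= N (y - z).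
Proof.
move=> Sz; apply: ge_inf; last by exists z.
by exists 0 => _ [z' _ <-]; exact: Nnorm_ge0.
Qed.

Lemma approx_by_sup_dist Y Z (d d' : R) :
  sup [set dist_to N y (sphere N Z) | y in sphere N Y] <= d -> d < d' ->
  sphere N Z !=set0 -> approx_by N d' Y Z.
Proof.
move=> supd dd' [z0 Sz0] u uY.
have [->|u0] := eqVneq u 0; first by exists 0; rewrite ?sub0mx // subr0 Nnorm0 // mulr0.
have Nu := Nnorm_gt0 HN u0; set y := (N u)^-1 *: u.
have Sy : sphere N Y y by split; [exact: scalemx_sub | exact: Nnorm_normalize].
have dist_y : dist_to N y (sphere N Z) < d'.
  apply: le_lt_trans _ dd'; apply: le_trans supd; apply: ub_le_sup; last by exists y.
  exists 2 => _ [y' [_ Ny'] <-]; apply: le_trans (dist_to_le _ Sz0) _.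
  by apply: le_trans (ler_NnormB HN _ _) _; rewrite Ny' Sz0.2.
have [_ [z [zZ Nz] <-] yz] := inf_lt (ex_intro _ _ (ex_intro2 _ _ z0 Sz0 erefl)) dist_y.
exists (N u *: z); first exact: scalemx_sub.
have -> : u - N u *: z = N u *: (y - z) by rewrite scalerBr scalerA mulfV ?gt_eqF ?scale1r.
by rewrite NnormZ // ger0_norm ?Nnorm_ge0 // mulrC ler_wpM2r ?Nnorm_ge0 ?ltW.
Qed.

Lemma hdist_approx_by Y Z (d d' : R) :
  (0 < \rank Y)%N -> (0 < \rank Z)%N -> hdist N Y Z <= d -> d < d' ->
  approx_by N d' Y Z /\ approx_by N d' Z Y.
Proof.
move=> rY rZ; rewrite /hdist ge_max => /andP[supYZ supZY] dd'.
by split; apply: approx_by_sup_dist dd' (sphere_neq0 _).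
Qed.

End HausdorffDistance.

Section ExtremePoints.
Variables (R : realType) (n : nat) (N : 'rV[R]_n -> R) (s : seq 'rV[R]_n).
Hypothesis HN : is_norm N.
Hypothesis Hs : ball1 N = conv_hull s.
Implicit Types (x z f g d : 'rV[R]_n) (P : 'M[R]_n).

Lemma extreme_ball1_vertex x : extreme (ball1 N) x -> x \in s.
Proof.
move=> [Bx xext]; move: (Bx); rewrite Hs => -[w [w0 w1 xE]].
have [i wi] : exists i, 0 < w i.
  apply/not_existsP => wle0; move: w1; rewrite big1 => [/esym/eqP|j _].
    by rewrite oner_eq0.
  by apply/eqP; rewrite eq_le w0 andbT leNgt; apply/negP => ?; apply: (wle0 j).
have wsum : w i + \sum_(j | j != i) w j = 1 by rewrite -w1 [RHS](bigD1 i).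
have xsum : x = w i *: s`_i + \sum_(j | j != i) w j *: s`_(val j).
  by rewrite xE [LHS](bigD1 i).
have [wi1|wi1] := eqVneq (w i) 1.
  have rest_sum0 : \sum_(j | j != i) w j = 0.
    by apply: (@addrI _ 1); rewrite addr0 -{1}wi1 wsum.
  have rest0 j : j != i -> w j = 0 := psumr_eq0P (fun k _ => w0 k) rest_sum0 (i := j).
  by rewrite xsum wi1 scale1r big1 ?addr0 ?mem_nth // => j /rest0 ->; rewrite scale0r.
have wi1' : w i < 1 by rewrite lt_def eq_sym wi1 -wsum lerDl sumr_ge0.
have t1 : 0 < 1 - w i by rewrite subr_gt0.
set z := \sum_(j | j != i) (w j / (1 - w i)) *: s`_(val j).
have Bz : ball1 N z.
  rewrite Hs; exists (fun j => (j != i)%:R * (w j / (1 - w i))); split.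
  - by move=> j; rewrite mulr_ge0 ?divr_ge0 // ltW.
  - have rest_sum : \sum_(j | j != i) w j = 1 - w i by rewrite -wsum addrC addKr.
    rewrite (bigD1 i) //= eqxx mul0r add0r -[RHS](mulfV (lt0r_neq0 t1)) -{2}rest_sum.
    by rewrite mulr_suml; apply: eq_bigr => j ->; rewrite mul1r.
  - rewrite /z [RHS](bigD1 i) //= eqxx mul0r scale0r add0r.
    by apply: eq_bigr => j ->; rewrite mul1r.
have xE2 : x = w i *: s`_i + (1 - w i) *: z.
  rewrite xsum /z scaler_sumr; congr (_ + _); apply: eq_bigr => j _.
  by rewrite scalerA mulrCA mulfV ?gt_eqF // mulr1.
have Bs : ball1 N s`_i by rewrite Hs; exact: conv_hull_vertex.
have [<- _] := xext _ _ (w i) Bs Bz (introT andP (conj wi wi1')) xE2.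
by rewrite mem_nth.
Qed.

Lemma dual_ball1P f : dual_ball1 N f <-> forall i : 'I_(size s), pairing f s`_i <= 1.
Proof.
have ub r : [set pairing f x | x in ball1 N] r -> r <= vertex_l1 s * l1norm f.
  move=> [x Bx <-]; apply: le_trans (ler_norm _) _; apply: le_trans (ler_pairing _ _) _.
  by rewrite ler_wpM2r ?l1norm_ge0 // (ler_l1norm_ball Hs).
split=> [f1 i|f1].
  apply: le_trans f1; apply: ub_le_sup; first by exists (vertex_l1 s * l1norm f).
  by exists s`_i => //; rewrite Hs; exact: conv_hull_vertex.
apply: ge_sup; first by exists 0, 0; [rewrite /ball1 /= Nnorm0 | rewrite /pairing mul0mx mxE].
move=> _ [x + <-]; rewrite Hs => -[w [w0 w1 ->]].
rewrite pairing_sumr -w1; apply: ler_sum => i _.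
by rewrite pairingZr -[leRHS]mulr1 ler_wpM2l ?f1.
Qed.

Lemma extreme_dual_ball1_rigid f d : extreme (dual_ball1 N) f ->
  (forall i : 'I_(size s), pairing f s`_i = 1 -> pairing d s`_i = 0) -> d = 0.
Proof.
move=> [Bf fext] dtight; have f1 := (dual_ball1P f).1 Bf.
pose gap (i : 'I_(size s)) := (1 - pairing f s`_i) / (`|pairing d s`_i| + 1).
pose e := \big[Num.min/1]_(i : 'I_(size s) | pairing f s`_i != 1) gap i.
have pos (i : 'I_(size s)) : 0 < `|pairing d s`_i| + 1 by rewrite ltr_pwDr.
have e0 : 0 < e.
  rewrite /e; elim/big_ind: _ => // [a b a0 b0|i fi]; first by rewrite lt_min a0 b0.
  by apply: divr_gt0 (pos i); rewrite subr_gt0 lt_def eq_sym fi f1.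
have slack (i : 'I_(size s)) : pairing f s`_i + e * `|pairing d s`_i| <= 1.
  have [fi|fi] := eqVneq (pairing f s`_i) 1; first by rewrite fi (dtight i fi) normr0 mulr0 addr0.
  have : e <= gap i by exact: bigmin_le_cond.
  rewrite ler_pdivlMr // => egap.
  by rewrite -lerBrDl; apply: le_trans egap; rewrite mulrDr mulr1 lerDl ltW.
have Bfp : dual_ball1 N (f + e *: d).
  apply/dual_ball1P => i; apply: le_trans (slack i).
  by rewrite pairingDl pairingZl lerD2l ler_pM2l // ler_norm.
have Bfm : dual_ball1 N (f - e *: d).
  apply/dual_ball1P => i; apply: le_trans (slack i).
  by rewrite pairingBl pairingZl lerD2l -mulrN ler_pM2l // -normrN ler_norm.
have half : 0 < (2^-1 : R) < 1 by rewrite invr_gt0 invf_lt1 ?ltr1n ?ltr0n.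
have fmid : f = 2^-1 *: (f + e *: d) + (1 - 2^-1) *: (f - e *: d).
  by apply/rowP => j; rewrite !mxE; field.
have [fp _] := fext _ _ _ Bfp Bfm half fmid.
have /eqP : e *: d = 0 by rewrite -(addKr f (e *: d)) fp addNr.
by rewrite scaler_eq0 gt_eqF // => /eqP.
Qed.

(* The vertex x is coded by its position in s; f is coded by the vertices on
   which it equals 1 (see extreme_dual_ball1_rigid). *)
Definition code_type := ('I_(size s).+1 * {set 'I_(size s)})%type.

Definition code x f : code_type :=
  (inord (index x s), [set i : 'I_(size s) | pairing f s`_i == 1]%SET).

Lemma code_inj x f x' f' :
  extreme (ball1 N) x -> extreme (dual_ball1 N) f ->
  extreme (ball1 N) x' -> extreme (dual_ball1 N) f' ->
  code x f = code x' f' -> x = x' /\ f = f'.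
Proof.
move=> /extreme_ball1_vertex xs ef /extreme_ball1_vertex x's _ [/(congr1 val)].
rewrite /= !inordK ?ltnS ?index_size // => xx' ff'; split.
  by rewrite -(nth_index 0 xs) xx' nth_index.
apply/eqP; rewrite -subr_eq0; apply/eqP; apply: (extreme_dual_ball1_rigid ef) => i fi.
have : i \in [set i : 'I_(size s) | pairing f' s`_i == 1]%SET by rewrite -ff' inE fi.
by rewrite inE pairingBl fi => /eqP ->; rewrite subrr.
Qed.

Definition norming_codes P : {set code_type} :=
  [set t | `[< exists x f, norming_pair N P x f /\ code x f = t >]]%SET.

Lemma norming_codesP P t :
  reflect (exists x f, norming_pair N P x f /\ code x f = t) (t \in norming_codes P).
Proof. by rewrite inE; apply: asboolP. Qed.

Lemma norming_pair_code_inj P P' x f x' f' :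
  norming_pair N P x f -> norming_pair N P' x' f' -> code x f = code x' f' ->
  x = x' /\ f = f'.
Proof. by move=> [ex ef _] [ex' ef' _]; exact: code_inj. Qed.

Lemma at_most_normingE P m : at_most_norming N P m <-> (#|norming_codes P| <= m)%N.
Proof.
split=> [[l [lm lP]]|card_m].
  apply: leq_trans lm; rewrite -(size_map (fun p => code p.1 p.2)).
  apply: leq_trans (card_size _); apply: subset_leq_card; apply/fintype.subsetP.
  by move=> _ /norming_codesP[x [f [xf <-]]]; apply/mapP; exists (x, f) => //; exact: lP.
pose pair_of t := xget (0, 0) [set p | norming_pair N P p.1 p.2 /\ code p.1 p.2 = t].
exists [seq pair_of t | t <- enum (norming_codes P)]; split; first by rewrite size_map -cardE.
move=> x f xf; apply/mapP; exists (code x f).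
  by rewrite mem_enum; apply/norming_codesP; exists x, f.
have : [set p | norming_pair N P p.1 p.2 /\ code p.1 p.2 = code x f] (pair_of (code x f)).
  by apply: xgetPex; exists (x, f).
case: (pair_of _) => x' f' [x'f' code_eq].
by have [-> ->] := norming_pair_code_inj xf x'f' (esym code_eq).
Qed.

End ExtremePoints.

Lemma fin_witness_uniform (R : realType) (T : finType) (Q : R -> T -> Prop) :
  (forall r r' t, r <= r' -> Q r t -> Q r' t) ->
  (forall r, 0 < r -> exists t, Q r t) -> exists t, forall r, 0 < r -> Q r t.
Proof.
move=> Qmono Qex; apply: contrapT => /forallNP noQ.
have /choice[rad radP] : forall t, exists r, 0 < r /\ ~ Q r t.
  by move=> t; have /existsNP[r /not_implyP] := noQ t; exists r.
pose r0 := \big[Num.min/1]_t rad t.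
have r0_gt0 : 0 < r0.
  by rewrite /r0; elim/big_ind: _ => // [a b a0 b0|t _]; [rewrite lt_min a0 b0|case: (radP t)].
have [t Qt] := Qex r0 r0_gt0.
by case: (radP t) => _; apply; apply: Qmono Qt; exact: bigmin_le.
Qed.

Lemma bounded_family_cluster (R : realType) (n : nat) (F : R -> set 'M[R]_n) (d1 B : R) :
  0 < d1 -> (forall d d', d <= d' -> F d `<=` F d') ->
  (forall d, 0 < d -> F d !=set0) ->
  (forall P, F d1 P -> forall i j, `|P i j| <= B) ->
  exists Ps, forall e d, 0 < e -> 0 < d -> exists2 P, F d P & l1mx (Ps - P) <= e.
Proof.
move=> d1_gt0 Fmono Fne Fbound.
pose G := filter_from [set d | 0 < d <= d1] (fun d => mxvec @` F d).
have G_proper : ProperFilter G.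
  apply: filter_from_proper; last first.
    by move=> d /andP[d0 _]; have [P FP] := Fne d d0; exists (mxvec P), P.
  apply: filter_from_filter; first by exists d1; rewrite /= d1_gt0 lexx.
  move=> d d' /andP[d0 dd1] /andP[d'0 d'd1]; exists (Num.min d d').
    by rewrite /= lt_min d0 d'0 ge_min dd1.
  by move=> _ [P FP <-]; split; exists P => //; apply: Fmono FP; rewrite ge_min lexx ?orbT.
have G_box : G [set v | forall i, `[- B, B]%classic (v ord0 i)].
  exists d1; first by rewrite /= d1_gt0 lexx.
  move=> _ [P FP <-] i; case/mxvec_indexP: i => i j.
  by rewrite /= mxvecE in_itv /= -ler_norml Fbound.
have [p [_ p_cluster]] := rV_compact (fun _ => @segment_compact R (- B) B) G_proper G_box.
exists (vec_mx p) => e d e0 d0.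
have nn : 0 < (n * n)%:R + 1 :> R by rewrite ltr_pwDr.
set e' := e / ((n * n)%:R + 1).
have e'0 : 0 < e' by rewrite divr_gt0.
have Gd : G (mxvec @` F (Num.min d d1)).
  by exists (Num.min d d1) => //=; rewrite lt_min d0 d1_gt0 ge_min lexx orbT.
have [_ [[P FP <-] pP]] := p_cluster _ _ Gd (nbhsx_ballx p e' e'0).
exists P; first by apply: Fmono FP; rewrite ge_min lexx.
apply: (@le_trans _ _ (\sum_(i < n) \sum_(j < n) e')).
  apply: ler_sum => i _; apply: ler_sum => j _; apply: ltW.
  by move: pP => [_ /(_ ord0 (mxvec_index i j))]; rewrite /ball /= mxvecE !mxE.
rewrite !big_const_ord !iter_addr_0 -mulrnA -mulr_natr /e' mulrAC ler_pdivrMr //.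
by rewrite ler_pM2l // lerDl.
Qed.

Section Main.
Variables (R : realType) (n k : nat) (N : 'rV[R]_n -> R) (Y : 'M[R]_n) (s : seq 'rV[R]_n).
Hypothesis HN : is_norm N.
Hypothesis Hs : ball1 N = conv_hull s.
Hypothesis k_gt0 : (0 < k)%N.
Hypothesis rY : \rank Y = k.
Implicit Types (A : {set code_type s}) (P : 'M[R]_n) (y : 'rV[R]_n).

Definition near_min_proj A (d : R) : set 'M[R]_n :=
  [set P | exists Y0, [/\ \rank Y0 = k, hdist N Y Y0 <= d,
                        is_min_proj N Y0 P & norming_codes N s P = A]].

Lemma near_min_proj_mono A d d' : d <= d' -> near_min_proj A d `<=` near_min_proj A d'.
Proof. by move=> dd' P [Y0 [rY0 Y0d minP PA]]; exists Y0; split => //; exact: le_trans dd'. Qed.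

Lemma approx_by_near (Y0 : 'M[R]_n) (d d' : R) : \rank Y0 = k -> hdist N Y Y0 <= d -> d < d' ->
  approx_by N d' Y Y0 /\ approx_by N d' Y0 Y.
Proof. by move=> rY0; apply: (hdist_approx_by HN); rewrite ?rY ?rY0. Qed.

Lemma recurring_codes m :
  ~ (exists r : R, 0 < r /\ forall Y0 : 'M[R]_n, \rank Y0 = k -> hdist N Y Y0 <= r ->
       forall P, is_min_proj N Y0 P -> at_most_norming N P m) ->
  exists A, (m < #|A|)%N /\ forall d, 0 < d -> near_min_proj A d !=set0.
Proof.
move=> no_r.
have [|r r0|A AP] := @fin_witness_uniform R _
  (fun d A => (m < #|A|)%N /\ near_min_proj A d !=set0).
- by move=> d d' A dd' [Am [P Pd]]; split=> //; exists P; exact: near_min_proj_mono Pd.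
- apply: contrapT => /forallNP no_bad; apply: no_r; exists r; split=> // Y0 rY0 Y0r P minP.
  apply/(at_most_normingE HN Hs); rewrite leqNgt; apply/negP => Pm.
  by apply: (no_bad (norming_codes N s P)); split=> //; exists P, Y0.
by exists A; split=> [|d d0]; [exact: (AP 1 ltr01).1 | exact: (AP d d0).2].
Qed.

Let Q0 := proj_mx Y (Y^C)%MS.
Let c0 := op_norm N Q0.
(* (c0 + 1) * d0 = 1/2, the threshold of proj_const_near. *)
Let d0 := (2 * (c0 + 1))^-1.

Let c0_ge0 : 0 <= c0. Proof. exact: op_norm_ge0 HN Hs Q0. Qed.

Let d0_gt0 : 0 < d0. Proof. by rewrite invr_gt0 mulr_gt0 // ltr_pwDr. Qed.

Lemma min_proj_bounded (Y0 : 'M[R]_n) P (d : R) : \rank Y0 = k -> 0 <= d -> d <= d0 ->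
  approx_by N d Y0 Y -> is_min_proj N Y0 P -> op_norm N P <= 2 * c0.
Proof.
move=> rY0 d_ge0 dd0; apply: (min_proj_near_le HN Hs _ (is_proj_proj_mx Y) d_ge0).
  by rewrite rY0 rY.
apply: le_trans (ler_wpM2l (addr_ge0 c0_ge0 ler01) dd0) _.
by rewrite /d0 invfM mulrCA mulfV ?mulr1 // gt_eqF // ltr_pwDr.
Qed.

Lemma near_min_proj_cluster A : (forall d, 0 < d -> near_min_proj A d !=set0) ->
  exists Ps, forall e d, 0 < e -> 0 < d ->
    exists2 P, near_min_proj A d P & l1mx (Ps - P) <= e.
Proof.
move=> Ane; have d1_gt0 : 0 < d0 / 2 by rewrite divr_gt0.
apply: (bounded_family_cluster (B := vertex_l1 s * (2 * c0) * l1_coef N) d1_gt0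
  (@near_min_proj_mono A) Ane).
move=> P [Y0 [rY0 Y0d minP _]] i j.
have [|_ near] := approx_by_near rY0 Y0d (_ : d0 / 2 < d0); first by have := d0_gt0; lra.
apply: le_trans (entry_le_op_norm HN Hs _ _ _) _.
apply: (ler_wpM2r (l1_coef_ge0 HN)); apply: (ler_wpM2l (vertex_l1_ge0 s)).
exact: min_proj_bounded rY0 (ltW d0_gt0) (lexx _) near minP.
Qed.

Section Limit.
Variables (A : {set code_type s}) (Ps : 'M[R]_n).
Hypothesis near_Ps : forall e d, 0 < e -> 0 < d ->
  exists2 P, near_min_proj A d P & l1mx (Ps - P) <= e.

Lemma near_limit e : 0 < e -> exists Y0 P,
  [/\ \rank Y0 = k, is_min_proj N Y0 P, norming_codes N s P = A, l1mx (Ps - P) <= e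
    & approx_by N e Y Y0 /\ approx_by N e Y0 Y].
Proof.
move=> e0; have [|P [Y0 [rY0 Y0e minP PA]] PsP] := near_Ps e0 (_ : 0 < e / 2); first by lra.
have [|YY0 Y0Y] := approx_by_near rY0 Y0e (_ : e / 2 < e); first by lra.
by exists Y0, P.
Qed.

Lemma limit_fixes_Y y : (y <= Y)%MS -> y *m Ps = y.
Proof.
move=> yY; apply/eqP; rewrite -subr_eq0; apply/eqP.
apply: (Nnorm_small_eq0 HN (b := (mulmx_coef N s + 2 * c0 + 1) * N y) _ d0_gt0).
  by rewrite mulr_ge0 ?Nnorm_ge0 // !addr_ge0 ?mulmx_coef_ge0 ?mulr_ge0.
move=> e e0 ed0; have [Y0 [P [rY0 minP _ PsP [YY0 Y0Y]]]] := near_limit e0.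
have Pb := min_proj_bounded rY0 (ltW e0) ed0 Y0Y minP.
have [z zY0 yz] := YY0 y yY.
have -> : y *m Ps - y = y *m (Ps - P) + (y - z) *m P + (z - y).
  by rewrite mulmxBr mulmxBl (minP.1.2 z zY0) !addrA subrK addrNK.
have yPsP := ler_N_mulmx_l1mx HN Hs y PsP.
have yzP : N ((y - z) *m P) <= 2 * c0 * e * N y.
  apply: le_trans (ler_op_norm HN Hs _ _) _; rewrite -mulrA.
  exact: ler_pM (op_norm_ge0 HN Hs P) (Nnorm_ge0 HN _) Pb yz.
have zy : N (z - y) <= e * N y by rewrite -NnormN // opprB.
have := ler_NnormD HN (y *m (Ps - P) + (y - z) *m P) (z - y).
have := ler_NnormD HN (y *m (Ps - P)) ((y - z) *m P).
by lra.
Qed.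

Lemma limit_sub_Y : (Ps <= Y)%MS.
Proof.
apply/row_subP => i; rewrite rowE; set x := delta_mx 0 i : 'rV[R]_n.
apply: (submx_of_near HN Hs (b := (mulmx_coef N s + 2 * c0) * N x) _ d0_gt0).
  by rewrite mulr_ge0 ?Nnorm_ge0 // addr_ge0 ?(mulmx_coef_ge0 s HN) ?mulr_ge0.
move=> e e0 ed0; have [Y0 [P [rY0 minP _ PsP [_ Y0Y]]]] := near_limit e0.
have Pb := min_proj_bounded rY0 (ltW e0) ed0 Y0Y minP.
have [w wY xPw] := Y0Y (x *m P) (proj_sub x minP.1).
exists w => //.
have -> : x *m Ps - w = x *m (Ps - P) + (x *m P - w) by rewrite mulmxBr addrA subrK.
have xPsP := ler_N_mulmx_l1mx HN Hs x PsP.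
have xP : N (x *m P) <= 2 * c0 * N x.
  apply: le_trans (ler_op_norm HN Hs _ _) _.
  exact: (ler_wpM2r (Nnorm_ge0 HN x) Pb).
have := ler_NnormD HN (x *m (Ps - P)) (x *m P - w).
have := ler_wpM2l (ltW e0) xP.
by lra.
Qed.

Lemma limit_op_norm_le : op_norm N Ps <= proj_const N Y.
Proof.
apply/ler_addgt0Pr => eta eta0.
have [Q projQ Qeta] := proj_const_approx N Y eta0; set q := op_norm N Q in Qeta *.
have q0 : 0 <= q := op_norm_ge0 HN Hs Q.
suff : op_norm N Ps <= q by move=> Psq; apply: le_trans Psq (ltW Qeta).
rewrite -subr_le0; set c := (2 * (q + 1))^-1.
have c0' : 0 < c by rewrite invr_gt0 mulr_gt0 // ltr_pwDr.
apply: (le0_small_mul (b := 2 * q * (q + 1) + mulmx_coef N s) _ c0').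
  by rewrite addr_ge0 ?(mulmx_coef_ge0 s HN) // !mulr_ge0 // addr_ge0.
move=> e e0 ec; have [Y0 [P [rY0 [_ PY0] _ PsP [_ Y0Y]]]] := near_limit e0.
have small : (q + 1) * e <= 2^-1.
  apply: le_trans (ler_wpM2l (addr_ge0 q0 ler01) ec) _.
  by rewrite /c invfM mulrCA mulfV ?mulr1 // gt_eqF // ltr_pwDr.
have rY0' : \rank Y0 = \rank Y by rewrite rY0 rY.
have := proj_const_near HN Hs rY0' projQ (ltW e0) small Y0Y; rewrite -PY0 -/q.
have := op_norm_lipschitz HN Hs Ps P; rewrite ler_norml => /andP[_].
have := ler_wpM2l (mulmx_coef_ge0 s HN) PsP.
by lra.
Qed.

(* A code determines its norming pair, so one pair (x, f) norms all the
   projections of the family, hence also their limit. *)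
Lemma limit_norming_codes : A \subset norming_codes N s Ps.
Proof.
apply/fintype.subsetP => t tA.
have [Y1 [P1 [_ _ P1A _ _]]] := near_limit ltr01.
have /norming_codesP[x [f [xf1 xft]]] : t \in norming_codes N s P1 by rewrite P1A.
subst t.
have [ex ef _] := xf1; apply/norming_codesP; exists x, f; split=> //; split=> //.
apply/eqP; rewrite -subr_eq0 -normr_le0.
apply: (le0_small_mul (b := l1norm x * l1norm f + mulmx_coef N s) _ ltr01).
  by rewrite addr_ge0 ?(mulmx_coef_ge0 s HN) // mulr_ge0 ?l1norm_ge0.
move=> e e0 _; have [Y0 [P [_ _ PA PsP _]]] := near_limit e0.
have /norming_codesP[x' [f' [xf' code_eq]]] : code s x f \in norming_codes N s P.
  by rewrite PA.
have [xx' ff'] := norming_pair_code_inj HN Hs xf1 xf' (esym code_eq); subst x' f'.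
have [_ _ Pxf] := xf'.
have -> : pairing f (x *m Ps) - op_norm N Ps =
          pairing f (x *m (Ps - P)) + (op_norm N P - op_norm N Ps).
  by rewrite mulmxBr pairingBr Pxf addrA subrK.
have pair_small : `|pairing f (x *m (Ps - P))| <= l1norm x * e * l1norm f.
  apply: le_trans (ler_pairing _ _) _; apply: (ler_wpM2r (l1norm_ge0 f)).
  apply: le_trans (ler_l1norm_mulmx _ _) _; exact: (ler_wpM2l (l1norm_ge0 x)).
have := op_norm_lipschitz HN Hs P Ps; rewrite -l1mxN opprB.
have := ler_wpM2l (mulmx_coef_ge0 s HN) PsP.
have := ler_normD (pairing f (x *m (Ps - P))) (op_norm N P - op_norm N Ps).
by lra.
Qed.

Lemma limit_is_min_proj : is_min_proj N Y Ps.
Proof.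
have projPs : is_proj Y Ps by split; [exact: limit_sub_Y | exact: limit_fixes_Y].
by split=> //; apply/eqP; rewrite eq_le limit_op_norm_le (proj_const_le HN Hs projPs).
Qed.

End Limit.

End Main.

Theorem mainTheorem16 (R : realType) (n k m : nat) (N : 'rV[R]_n -> R)
    (Y : 'M[R]_n) :
  is_norm N -> polyhedral N ->
  (2 <= k)%N -> (k <= n.-1)%N -> (0 < m)%N ->
  \rank Y = k ->
  (forall P, is_min_proj N Y P -> at_most_norming N P m) ->
  exists r : R, 0 < r /\
    forall Y0 : 'M[R]_n, \rank Y0 = k -> hdist N Y Y0 <= r ->
      forall P, is_min_proj N Y0 P -> at_most_norming N P m.
Proof.
move=> HN [s Hs] k_ge2 _ _ rY Ym; have k_gt0 : (0 < k)%N by apply: leq_trans k_ge2.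
apply: contrapT => no_r.
have [A [Am A_recurs]] := recurring_codes HN Hs no_r.
have [Ps near_Ps] := near_min_proj_cluster HN Hs k_gt0 rY A_recurs.
have Ps_min := limit_is_min_proj HN Hs k_gt0 rY near_Ps.
have card_A : (#|A| <= m)%N.
  apply: leq_trans (subset_leq_card (limit_norming_codes HN Hs k_gt0 rY near_Ps)) _.
  exact/(at_most_normingE HN Hs)/Ym.
by rewrite leqNgt Am in card_A.
Qed.
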